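(* Let $q(m,n)=am^2+bmn+cn^2$ with $a,b,c\in\mathbb{Z}$ be a binary quadratic form whose discriminant $\Delta(q)=b^2-4ac$ is a perfect square (including $0$, and including the zero form). Then for every $0<\lambda\le 1$ there exists a nonnegative $f\in\ell^1(\mathbb{Z})$ with $\|\mathcal{I}_\lambda f\|_{\ell^1(\mathbb{Z})}=\infty$, where $\mathcal{I}_{\lambda}f(n)=\sum_{m\in\mathbb{Z}\setminus\{0\}}\frac{f(q(m,n))}{|m|^{\lambda}}$.
   Context: Sums of nonnegative terms are allowed to equal $+\infty$. *)

From Stdlib Require Import Reals ZArith List.
Open Scope R_scope.

Definition zpsum (g : Z -> R) (l : list Z) : R :=
  fold_right (fun k acc => g k + acc) 0 l.

(* The (nonnegative) series sum_{k in Z} g k converges to s: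
   s is the least upper bound of all finite partial sums. *)
Definition is_zsum (g : Z -> R) (s : R) : Prop :=
  is_lub (fun x => exists l : list Z, NoDup l /\ x = zpsum g l) s.

Definition zsum_finite (g : Z -> R) : Prop :=
  exists M : R, forall l : list Z, NoDup l -> zpsum g l <= M.

Definition in_l1 (f : Z -> R) : Prop := zsum_finite (fun k => Rabs (f k)).

Definition qform (a b c m n : Z) : Z := (a*m*m + b*m*n + c*n*n)%Z.

(* Summand of I_lambda f(n): f(q(m,n)) / |m|^lambda for m <> 0,
   and 0 for m = 0 (so summing over Z is summing over Z \ {0}). *)
Definition Iterm (a b c : Z) (lam : R) (f : Z -> R) (n m : Z) : R :=
  if Z.eqb m 0 then 0
  else f (qform a b c m n) / Rpower (IZR (Z.abs m)) lam.

(* ||I_lambda f||_{l^1(Z)} = +infinity : it is NOT the case that every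
   I_lambda f(n) is a finite number F n and sum_n F n is finite. *)
Definition Inorm_infinite (a b c : Z) (lam : R) (f : Z -> R) : Prop :=
  ~ (exists F : Z -> R,
       (forall n, is_zsum (Iterm a b c lam f n) (F n)) /\
       zsum_finite (fun n => Rabs (F n))).

(* Take f to be the indicator of a single integer k0, so that I_lam f(n) >= sum of 1/|m| over
   the m <> 0 with q(m,n) = k0.  Since the discriminant is a square, q factors over Z and one
   of three things happens.  If a = 0, then q(m,0) = 0 for all m and already I_lam f(0) is a
   divergent harmonic series.  If a <> 0 and b = c = 0, then q(1,n) = a for all n, so
   I_lam f(n) >= 1 for every n.  Otherwise q has an isotropic vector (p,s) with p, s <> 0, and
   q(tp,ts) = 0 gives I_lam f(ts) >= 1/(|p| t), whose sum over t diverges. *)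
From Stdlib Require Import Reals ZArith List Lra Lia FinFun.
Open Scope R_scope.

Lemma exists_INR_gt (M : R) : exists n : nat, M < INR n.
Proof.
  destruct (archimed M) as [HM _].
  destruct (Z_lt_le_dec (up M) 0) as [Hneg | Hnneg].
  - exists O; apply IZR_lt in Hneg; simpl; lra.
  - exists (Z.to_nat (up M)); rewrite INR_IZR_INZ, Z2Nat.id by exact Hnneg; lra.
Qed.

Definition harmonic (N : nat) : R := sum_f_R0 (fun i => / INR (S i)) N.

Lemma harmonic_double_ge (N : nat) : harmonic N + / 2 <= harmonic (S (2 * N)).
Proof.
  unfold harmonic.
  rewrite (tech2 _ N (S (2 * N))) by lia.
  replace (S (2 * N) - S N)%nat with N by lia.
  apply Rplus_le_compat_l.
  assert (Hpos : 0 < INR (S N)) by (apply lt_0_INR; lia).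
  (* each of the N+1 new terms is at least 1/(2N+2) *)
  apply Rle_trans with (sum_f_R0 (fun _ => / (2 * INR (S N))) N).
  - rewrite sum_cte; right; field; lra.
  - apply sum_Rle; intros i Hi.
    apply Rinv_le_contravar; [apply lt_0_INR; lia |].
    replace (2 * INR (S N)) with (INR (2 * S N)) by (rewrite mult_INR; reflexivity).
    apply le_INR; lia.
Qed.

Lemma harmonic_unbounded (M : R) : exists N, M < harmonic N.
Proof.
  assert (Hgrow : forall k : nat, exists N, 1 + INR k / 2 <= harmonic N).
  { induction k as [|k [N HN]].
    - exists O; unfold harmonic; simpl; lra.
    - exists (S (2 * N)); pose proof (harmonic_double_ge N); rewrite S_INR; lra. }
  destruct (exists_INR_gt (2 * M)) as [k Hk].
  destruct (Hgrow k) as [N HN]; exists N; lra.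
Qed.

Definition zpsum_unbounded (g : Z -> R) : Prop :=
  forall M, exists l, NoDup l /\ M < zpsum g l.

Lemma zpsum_app (g : Z -> R) (l1 l2 : list Z) :
  zpsum g (l1 ++ l2) = zpsum g l1 + zpsum g l2.
Proof. induction l1 as [|x l1 IH]; simpl; [ring|]. unfold zpsum in *; simpl; rewrite IH; ring. Qed.

Lemma zpsum_map_seq (g : Z -> R) (h : nat -> Z) (N : nat) :
  zpsum g (map h (seq 0 (S N))) = sum_f_R0 (fun t => g (h t)) N.
Proof.
  induction N as [|N IH]; [unfold zpsum; simpl; ring|].
  rewrite seq_S, map_app, zpsum_app, IH; unfold zpsum; simpl; ring.
Qed.

Lemma zpsum_unbounded_harmonic (g : Z -> R) (h : nat -> Z) (C : R) :
  0 < C -> Injective h -> (forall t, / (C * INR (S t)) <= g (h t)) ->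
  zpsum_unbounded g.
Proof.
  intros HC Hinj Hg M.
  destruct (harmonic_unbounded (C * M)) as [N HN].
  exists (map h (seq 0 (S N))); split.
  { apply Injective_map_NoDup; [exact Hinj | apply seq_NoDup]. }
  rewrite zpsum_map_seq.
  apply Rlt_le_trans with (/ C * harmonic N).
  - apply (Rmult_lt_reg_l C); [lra|]. field_simplify; lra.
  - unfold harmonic; rewrite scal_sum; apply sum_Rle; intros t _.
    rewrite <- Rinv_mult, Rmult_comm; apply Hg.
Qed.

Lemma zpsum_unbounded_not_finite (g : Z -> R) : zpsum_unbounded g -> ~ zsum_finite g.
Proof. intros Hg [M HM]; destruct (Hg M) as [l [Hl HlM]]; specialize (HM l Hl); lra. Qed.

Lemma zpsum_unbounded_not_zsum (g : Z -> R) (s : R) : zpsum_unbounded g -> ~ is_zsum g s.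
Proof.
  intros Hg [Hub _]; apply (zpsum_unbounded_not_finite g Hg).
  exists s; intros l Hl; apply Hub; exists l; auto.
Qed.

Lemma is_zsum_ge_term (g : Z -> R) (s : R) (k : Z) : is_zsum g s -> g k <= s.
Proof.
  intros [Hub _]; replace (g k) with (zpsum g (k :: nil)) by (unfold zpsum; simpl; ring).
  apply Hub; exists (k :: nil); split; [repeat constructor; simpl; tauto | reflexivity].
Qed.

Definition indicator (k0 : Z) (k : Z) : R := if Z.eqb k k0 then 1 else 0.

Lemma indicator_nonneg (k0 k : Z) : 0 <= indicator k0 k.
Proof. unfold indicator; destruct (Z.eqb k k0); lra. Qed.

Lemma zpsum_indicator_notin (k0 : Z) (l : list Z) :
  ~ In k0 l -> zpsum (fun k => Rabs (indicator k0 k)) l = 0.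
Proof.
  induction l as [|x l IH]; intros Hl; [reflexivity|].
  unfold zpsum in *; simpl in *; rewrite IH by tauto.
  unfold indicator; destruct (Z.eqb_spec x k0); [subst; tauto|].
  rewrite Rabs_R0; ring.
Qed.

Lemma indicator_in_l1 (k0 : Z) : in_l1 (indicator k0).
Proof.
  exists 1; intros l Hl; induction Hl as [|x l Hx Hl IH]; [unfold zpsum; simpl; lra|].
  change (Rabs (indicator k0 x) + zpsum (fun k => Rabs (indicator k0 k)) l <= 1).
  unfold indicator at 1; destruct (Z.eqb_spec x k0) as [-> | _].
  - rewrite zpsum_indicator_notin by exact Hx; rewrite Rabs_R1; lra.
  - rewrite Rabs_R0; lra.
Qed.

Lemma Rpower_le_base (x lam : R) : 1 <= x -> lam <= 1 -> Rpower x lam <= x.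
Proof. intros. rewrite <- (Rpower_1 x) at 2 by lra. apply Rle_Rpower; lra. Qed.

Lemma Iterm_indicator_ge (a b c : Z) (lam : R) (k0 n m : Z) :
  lam <= 1 -> m <> 0%Z -> qform a b c m n = k0 ->
  / IZR (Z.abs m) <= Iterm a b c lam (indicator k0) n m.
Proof.
  intros Hlam Hm Hq; unfold Iterm, indicator.
  destruct (Z.eqb_spec m 0) as [|_]; [lia|].
  rewrite Hq, Z.eqb_refl; unfold Rdiv; rewrite Rmult_1_l.
  assert (Hm1 : 1 <= IZR (Z.abs m)) by (apply IZR_le; lia).
  apply Rinv_le_contravar; [apply exp_pos | apply Rpower_le_base; lra].
Qed.

Lemma qform_scale (a b c p s t : Z) : qform a b c (t * p) (t * s) = (t * t * qform a b c p s)%Z.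
Proof. unfold qform; ring. Qed.

Section InormInfinite.

Variables (a b c : Z) (lam : R).
Hypothesis Hlam : lam <= 1.

Lemma Inorm_infinite_const_in_m (n0 k0 : Z) :
  (forall m, qform a b c m n0 = k0) -> Inorm_infinite a b c lam (indicator k0).
Proof.
  intros Hq [F [HF _]].
  refine (zpsum_unbounded_not_zsum _ _ _ (HF n0)).
  apply (zpsum_unbounded_harmonic _ (fun t => Z.of_nat (S t)) 1); [lra | intros x y; lia |].
  intros t; rewrite Rmult_1_l, INR_IZR_INZ.
  rewrite <- (Z.abs_eq (Z.of_nat (S t))) at 1 by lia.
  apply Iterm_indicator_ge; auto; lia.
Qed.

Lemma Inorm_infinite_const_in_n (m0 k0 : Z) : m0 <> 0%Z ->
  (forall n, qform a b c m0 n = k0) -> Inorm_infinite a b c lam (indicator k0).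
Proof.
  intros Hm0 Hq [F [HF HFfin]].
  refine (zpsum_unbounded_not_finite _ _ HFfin).
  assert (Hm0pos : 0 < IZR (Z.abs m0)) by (apply IZR_lt; lia).
  apply (zpsum_unbounded_harmonic _ Z.of_nat (IZR (Z.abs m0))); [exact Hm0pos | intros x y; lia |].
  intros t; apply Rle_trans with (/ IZR (Z.abs m0)).
  - apply Rinv_le_contravar; [lra|].
    assert (Ht : 1 <= INR (S t)) by (apply (le_INR 1); lia).
    rewrite <- (Rmult_1_r (IZR (Z.abs m0))) at 1; apply Rmult_le_compat_l; lra.
  - apply Rle_trans with (Iterm a b c lam (indicator k0) (Z.of_nat t) m0).
    + apply Iterm_indicator_ge; auto.
    + eapply Rle_trans; [apply is_zsum_ge_term, HF | apply Rle_abs].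
Qed.

Lemma Inorm_infinite_isotropic (p s : Z) : p <> 0%Z -> s <> 0%Z ->
  qform a b c p s = 0%Z -> Inorm_infinite a b c lam (indicator 0).
Proof.
  intros Hp Hs Hq [F [HF HFfin]].
  refine (zpsum_unbounded_not_finite _ _ HFfin).
  assert (Hppos : 0 < IZR (Z.abs p)) by (apply IZR_lt; lia).
  apply (zpsum_unbounded_harmonic _ (fun t => Z.of_nat (S t) * s)%Z (IZR (Z.abs p)) Hppos).
  { intros x y Hxy; apply Z.mul_reg_r in Hxy; lia. }
  intros t; set (n := (Z.of_nat (S t) * s)%Z).
  apply Rle_trans with (Iterm a b c lam (indicator 0) n (Z.of_nat (S t) * p)).
  - replace (IZR (Z.abs p) * INR (S t)) with (IZR (Z.abs (Z.of_nat (S t) * p)))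
      by (rewrite Z.abs_mul, mult_IZR, Z.abs_eq, <- INR_IZR_INZ by lia; ring).
    apply Iterm_indicator_ge; [exact Hlam | lia |].
    unfold n; rewrite qform_scale, Hq; ring.
  - eapply Rle_trans; [apply is_zsum_ge_term, HF | apply Rle_abs].
Qed.

End InormInfinite.

Lemma qform_isotropic_of_square_disc (a b c k : Z) :
  (b * b - 4 * a * c)%Z = (k * k)%Z -> a <> 0%Z -> (b <> 0 \/ c <> 0)%Z ->
  exists p s, p <> 0%Z /\ s <> 0%Z /\ qform a b c p s = 0%Z.
Proof.
  intros Hk Ha Hbc.
  (* 4a q(m,n) = (2am + (b - k) n)(2am + (b + k) n), so (±k - b, 2a) are isotropic *)
  destruct (Z.eq_dec (k - b) 0) as [Hkb | Hkb].
  - exists (- k - b)%Z, (2 * a)%Z; repeat split; [| lia | unfold qform; nia].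
    intros H0; assert (b = 0 /\ k = 0)%Z as [-> ->] by lia.
    destruct Hbc as [Hb | Hc]; [lia | apply Hc; nia].
  - exists (k - b)%Z, (2 * a)%Z; repeat split; [lia | lia | unfold qform; nia].
Qed.

Lemma indicator_counterexample (a b c : Z) (lam : R) (k0 : Z) :
  Inorm_infinite a b c lam (indicator k0) ->
  exists f : Z -> R, (forall k, 0 <= f k) /\ in_l1 f /\ Inorm_infinite a b c lam f.
Proof.
  intros Hinf; exists (indicator k0).
  split; [apply indicator_nonneg | split; [apply indicator_in_l1 | exact Hinf]].
Qed.

Theorem mainTheorem5 (a b c : Z)
  (hdisc : exists k : Z, (b*b - 4*a*c)%Z = (k*k)%Z)
  (lam : R) (hlam0 : 0 < lam) (hlam1 : lam <= 1) :
  exists f : Z -> R,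
    (forall k, 0 <= f k) /\ in_l1 f /\ Inorm_infinite a b c lam f.
Proof.
  destruct hdisc as [k Hk].
  destruct (Z.eq_dec a 0) as [Ha | Ha].
  { apply (indicator_counterexample _ _ _ _ 0).
    apply (Inorm_infinite_const_in_m _ _ _ _ hlam1 0); intros m; subst a; unfold qform; ring. }
  destruct (Z.eq_dec b 0) as [Hb | Hb]; [destruct (Z.eq_dec c 0) as [Hc | Hc] |].
  { apply (indicator_counterexample _ _ _ _ a).
    apply (Inorm_infinite_const_in_n _ _ _ _ hlam1 1); [lia |].
    intros n; subst b c; unfold qform; ring. }
  all: destruct (qform_isotropic_of_square_disc a b c k Hk Ha ltac:(lia)) as [p [s [Hp [Hs Hq]]]].
  all: exact (indicator_counterexample _ _ _ _ 0 (Inorm_infinite_isotropic _ _ _ _ hlam1 p s Hp Hs Hq)).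
Qed.
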